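(* Let $S$ be a finite right loop with $|S/\mathcal Z(S)|=k$, and let $\theta:G_S\to G_{S/\mathcal Z(S)}$ be the surjective homomorphism $f^S(y,z)\mapsto f^{S/\mathcal Z(S)}(\mathcal Z(S)\circ y,\mathcal Z(S)\circ z)$ induced by the natural projection. Then $\ker\theta$ is isomorphic to a subgroup of the abelian group $\mathcal Z(S)^{k-1}=\mathcal Z(S)\times\cdots\times\mathcal Z(S)$ ($k-1$ factors).
   Context: A right loop is a set $S$ with binary operation $\circ$ and two-sided identity $1$ such that each equation $X\circ a=b$ has a unique solution. For $y,z\in S$, $f^S(y,z):S\to S$ sends $x$ to the unique $X$ with $X\circ(y\circ z)=(x\circ y)\circ z$; $G_S\le\mathrm{Sym}(S)$ is generated by all $f^S(y,z)$. A congruence is an equivalence relation which is a right subloop of $S\times S$; an invariant right subloop is the class $T$ of $1$ under a congruence, $S/T=\{T\circ x\}$ with $(T\circ x)\circ(T\circ y)=T\circ(x\circ y)$. For congruences $\beta,\gamma$, $\gamma$ centralizes $\beta$ if there is a congruence $(\gamma|\beta)$ on the right loop $\beta\subseteq S\times S$ with: (i) $(x,y)(\gamma|\beta)(u,v)\Rightarrow x\gamma u$; (ii) for $(x,y)\in\beta$, $(u,v)\mapsto u$ is a bijection from the $(\gamma|\beta)$-class of $(x,y)$ to the $\gamma$-class of $x$; (iii) $(x,y)\in\gamma\Rightarrow(x,x)(\gamma|\beta)(y,y)$; (iv) $(x,y)(\gamma|\beta)(u,v)\Rightarrow(y,x)(\gamma|\beta)(v,u)$; (v) $(x,y)(\gamma|\beta)(u,v)$,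 $(y,z)(\gamma|\beta)(v,w)\Rightarrow(x,z)(\gamma|\beta)(u,w)$. The center congruence $\zeta(S)$ is the unique maximal congruence centralized by $S\times S$; the center $\mathcal Z(S)$ is its class of $1$, an abelian group under $\circ$. *)

From HB Require Import structures.
From mathcomp Require Import all_boot all_fingroup.
Set Implicit Arguments. Unset Strict Implicit. Unset Printing Implicit Defensive.

Local Open Scope group_scope.

Section RightLoops.
Variable T : finType.

Definition is_right_loop (op : T -> T -> T) (e : T) : Prop :=
  (forall x, op e x = x) /\ (forall x, op x e = x) /\
  (forall a b, exists! X, op X a = b).

Definition rdiv (op : T -> T -> T) (a b : T) : T :=
  odflt b [pick X | op X a == b].

Definition f_rl (op : T -> T -> T) (y z : T) (x : T) : T :=
  rdiv op (op y z) (op (op x y) z).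

(* f^S(y,z) as a permutation (it is injective when op is a right loop;
   the fallback 1 is never used for right loops) *)
Definition fperm (op : T -> T -> T) (y z : T) : {perm T} :=
  insubd (1 : {perm T}) [ffun x => f_rl op y z x].

Definition G_rl (op : T -> T -> T) : {group {perm T}} :=
  <<[set fperm op y z | y : T, z : T]>>%G.

(* Congruence on a sub-right-loop P of a right loop U: an equivalence
   relation on P which is a right subloop of P x P. *)
Definition is_congruence_in (U : Type) (P : U -> Prop) (opU : U -> U -> U)
    (eU : U) (R : U -> U -> Prop) : Prop :=
  [/\ (forall u v, R u v -> P u /\ P v),
      (forall u, P u -> R u u),
      (forall u v, R u v -> R v u),
      (forall u v w, R u v -> R v w -> R u w) &
      [/\ R eU eU,
          (forall a a' b b', R a a' -> R b b' -> R (opU a b) (opU a' b')) &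
          (forall a a' b b' X X', R a a' -> R b b' -> P X -> P X' ->
              opU X a = b -> opU X' a' = b' -> R X X')]].

Definition is_congruence (op : T -> T -> T) (e : T) (r : rel T) : Prop :=
  is_congruence_in (fun _ => True) op e (fun x y => r x y).

Definition pair_op (op : T -> T -> T) (p q : T * T) : T * T :=
  (op p.1 q.1, op p.2 q.2).

Definition centralizes (op : T -> T -> T) (e : T) (gamma beta : rel T) : Prop :=
  exists R : T * T -> T * T -> Prop,
    [/\ is_congruence_in (fun p => beta p.1 p.2) (pair_op op) (e, e) R,
        (forall x y u v, R (x, y) (u, v) -> gamma x u),
        (forall x y, beta x y ->
           (forall u v v', R (x, y) (u, v) -> R (x, y) (u, v') -> v = v') /\
           (forall u, gamma x u -> exists v, R (x, y) (u, v))),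
        (forall x y, gamma x y -> R (x, x) (y, y)) &
        [/\
            (forall x y u v, R (x, y) (u, v) -> R (y, x) (v, u)) &
            (forall x y z u v w, R (x, y) (u, v) -> R (y, z) (v, w) ->
               R (x, z) (u, w))]].

Definition is_center_congruence (op : T -> T -> T) (e : T) (zeta : rel T) : Prop :=
  [/\ is_congruence op e zeta,
      centralizes op e (fun _ _ => true) zeta &
      (forall beta : rel T, is_congruence op e beta ->
         centralizes op e (fun _ _ => true) beta ->
         forall x y, beta x y -> zeta x y)].

Definition center_of (e : T) (zeta : rel T) : {set T} := [set x | zeta e x].

Definition rl_coset (op : T -> T -> T) (Z : {set T}) (x : T) : {set T} :=
  [set op z x | z in Z].

Definition quot_set (op : T -> T -> T) (Z : {set T}) : {set {set T}} :=
  [set rl_coset op Z x | x : T].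

Definition rlquot_type (op : T -> T -> T) (Z : {set T}) :=
  {A : {set T} | A \in quot_set op Z}.

Lemma rl_coset_in_quot (op : T -> T -> T) (Z : {set T}) (x : T) :
  rl_coset op Z x \in quot_set op Z.
Proof. by apply/imsetP; exists x. Qed.

Definition qproj (op : T -> T -> T) (Z : {set T}) (x : T) : rlquot_type op Z :=
  exist _ (rl_coset op Z x) (rl_coset_in_quot op Z x).

(* a representative of a coset (default e, never used since 1 in Z) *)
Definition qrep (op : T -> T -> T) (Z : {set T}) (e : T) (A : rlquot_type op Z) : T :=
  odflt e [pick x in val A].

Definition qop (op : T -> T -> T) (Z : {set T}) (e : T)
    (A B : rlquot_type op Z) : rlquot_type op Z :=
  qproj op Z (op (qrep e A) (qrep e B)).

End RightLoops.

From mathcomp Require Import all_boot all_fingroup.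
Set Implicit Arguments. Unset Strict Implicit. Unset Printing Implicit Defensive.
Local Open Scope group_scope.

(* 1. Right-loop facts: right division, right cancellation, each f(y,z) is a
      permutation, G_S fixes 1 (any right loop).
   2. Elements of Z are "left nuclear": w (b c) = (w b) c, read off from the
      congruence (S x S | zeta) centralizing zeta.  Hence every element of
      G_S commutes with left multiplication by w in Z.
   3. The quotient: pi x = pi y iff zeta x y, pi (x y) = pi x pi y and
      pi (f(y,z) x) = f(pi y, pi z) (pi x); so theta g (pi x) = pi (g x), and
      g in ker theta maps every x into its own Z-coset: g x = c_g(x) x with
      c_g(x) in Z.
   4. By 2, g in ker theta is determined by the coordinates c_g(r) at one
      representative r of each coset, the coset Z of 1 being fixed pointwise,
      and c_{gh}(r) = c_g(r) c_h(r).  Taking representatives of the k - 1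
      nontrivial cosets embeds ker theta homomorphically into Z^(k-1). *)

Lemma fperm_injE (U : finType) (op : U -> U -> U) (y z : U) :
  injective (f_rl op y z) -> forall x, fperm op y z x = f_rl op y z x.
Proof.
move=> f_inj x; rewrite /fperm.
have f_injb : injectiveb [ffun x => f_rl op y z x].
  by apply/injectiveP => a b; rewrite !ffunE; apply: f_inj.
by rewrite -pvalE insubdK // ffunE.
Qed.

Lemma gen_ind (gT : finGroupType) (A : {set gT}) (P : gT -> Prop) :
  P 1 -> (forall g a, g \in <<A>> -> a \in A -> P g -> P (g * a)) ->
  forall g, g \in <<A>> -> P g.
Proof.
move=> P1 PM g /gen_prodgP[n [c Ac ->]].
elim: n c Ac => [|n IH] c Ac; first by rewrite big_ord0.
rewrite big_ord_recr /=; apply: PM => //; last exact: IH.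
by apply: group_prod => i _; apply: mem_gen.
Qed.

Section RightLoop.
Variables (T : finType) (op : T -> T -> T) (e : T).
Hypotheses (mul1x : forall x, op e x = x) (mulx1 : forall x, op x e = x)
  (rdiv_uniq : forall a b, exists! X, op X a = b).

Lemma rdivK (a b : T) : op (rdiv op a b) a = b.
Proof.
rewrite /rdiv; case: pickP => [X /eqP // | noX].
by case: (rdiv_uniq a b) => X [HX _]; move: (noX X); rewrite HX eqxx.
Qed.

Lemma mulIx (a : T) : injective (op^~ a).
Proof.
move=> X Y E; case: (rdiv_uniq a (op X a)) => X0 [_ X0_uniq].
by rewrite -(X0_uniq X erefl) (X0_uniq Y (esym E)).
Qed.

Lemma f_rlK (y z x : T) : op (f_rl op y z x) (op y z) = op (op x y) z.
Proof. exact: rdivK. Qed.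

Lemma f_rl_inj (y z : T) : injective (f_rl op y z).
Proof. by move=> x x' E; apply: (@mulIx y); apply: (@mulIx z); rewrite -!f_rlK E. Qed.

Lemma fpermE (y z x : T) : fperm op y z x = f_rl op y z x.
Proof. exact/fperm_injE/f_rl_inj. Qed.

Lemma G_rl_ind (P : {perm T} -> Prop) :
  P 1 -> (forall g y z, P g -> P (g * fperm op y z)) ->
  forall g, g \in G_rl op -> P g.
Proof.
move=> P1 PM; apply: gen_ind => // g a _ /imset2P[y z _ _ ->]; exact: PM.
Qed.

(* Every element of G_S fixes the identity, since f(y,z) 1 = 1. *)
Lemma G_rl_fix_e (g : {perm T}) : g \in G_rl op -> g e = e.
Proof.
move: g; apply: G_rl_ind => [|g y z IH]; first by rewrite perm1.
rewrite permM IH fpermE; apply: (@mulIx (op y z)).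
by rewrite f_rlK !mul1x.
Qed.

Definition ker_coord (g : {perm T}) (r : T) : T := rdiv op r (g r).

Lemma ker_coordK (g : {perm T}) (r : T) : op (ker_coord g r) r = g r.
Proof. exact: rdivK. Qed.

Section Center.
(* zeta is any congruence centralized by S x S (e.g. the center congruence). *)
Variable zeta : rel T.
Hypotheses (zeta_cong : is_congruence op e zeta)
  (zeta_central : centralizes op e (fun _ _ => true) zeta).

Lemma zeta_refl (x : T) : zeta x x.
Proof. by case: zeta_cong => _ refl _ _ _; apply: refl. Qed.

Lemma zeta_sym (x y : T) : zeta x y -> zeta y x.
Proof. by case: zeta_cong => _ _ sym _ _; apply: sym. Qed.

Lemma zeta_trans (x y z : T) : zeta x y -> zeta y z -> zeta x z.
Proof. by case: zeta_cong => _ _ _ trans _; apply: trans. Qed.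

Lemma zeta_mul (a a' b b' : T) :
  zeta a a' -> zeta b b' -> zeta (op a b) (op a' b').
Proof. by case: zeta_cong => _ _ _ _ [_ mul _]; apply: mul. Qed.

Lemma zeta_div (a a' b b' X X' : T) : zeta a a' -> zeta b b' ->
  op X a = b -> op X' a' = b' -> zeta X X'.
Proof.
case: zeta_cong => _ _ _ _ [_ _ div] Za Zb EX EX'.
exact: div Za Zb I I EX EX'.
Qed.

Lemma zeta_mull (w x : T) : zeta e w -> zeta x (op w x).
Proof. by move=> Zw; have := zeta_mul Zw (zeta_refl x); rewrite mul1x. Qed.

Lemma zeta_rdiv (x y : T) : zeta x y -> zeta e (rdiv op x y).
Proof.
move=> Zxy; apply: zeta_sym.
exact: (zeta_div (zeta_refl x) (zeta_sym Zxy) (rdivK x y) (mul1x x)).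
Qed.

(* Central elements associate on the left: (w b) c = w (b c).  The class of
   (1, w) under (S x S | zeta) is the graph of u |-> w u, and it contains
   both (b c, (w b) c) and (b c, w (b c)). *)
Lemma center_assoc (w b c : T) : zeta e w -> op (op w b) c = op w (op b c).
Proof.
move=> Zw; case: zeta_central => R [[_ Rrefl _ Rtrans [_ Rmul _]] _ Rfun Rdiag _].
have Rgraph u : R (e, w) (u, op w u).
  have := Rmul (e, w) (e, w) (e, e) (u, u) (Rrefl (e, w) Zw) (Rdiag e u isT).
  by rewrite /pair_op /= !mul1x mulx1.
have Rbc : R (e, w) (op b c, op (op w b) c).
  have := Rmul _ _ _ _ (Rgraph b) (Rdiag c c isT); rewrite /pair_op /= mul1x.
  exact: Rtrans (Rgraph c).
exact: (Rfun e w Zw).1 _ _ _ Rbc (Rgraph (op b c)).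
Qed.

Lemma G_rl_center_commute (g : {perm T}) (w x : T) :
  g \in G_rl op -> zeta e w -> g (op w x) = op w (g x).
Proof.
move=> Gg Zw; move: g Gg x; apply: G_rl_ind => [x|g y z IH x].
  by rewrite !perm1.
rewrite !permM IH !fpermE; apply: (@mulIx (op y z)).
by rewrite f_rlK !(center_assoc _ _ Zw) f_rlK.
Qed.

Local Notation Z := (center_of e zeta).
Local Notation pi := (qproj op (center_of e zeta)).
Local Notation qmul := (@qop T op (center_of e zeta) e).

Lemma mem_rl_coset (x u : T) : (u \in rl_coset op Z x) = zeta x u.
Proof.
apply/imsetP/idP => [[w] | Zxu]; first by rewrite inE => Zw ->; apply: zeta_mull.
by exists (rdiv op x u); rewrite ?inE ?zeta_rdiv ?rdivK.
Qed.

Lemma qproj_eqE (x y : T) : (pi x == pi y) = zeta x y.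
Proof.
apply/eqP/idP => [/(congr1 val) /= Exy | Zxy].
  by have := mem_rl_coset y y; rewrite zeta_refl -Exy mem_rl_coset.
apply: val_inj; apply/setP => u; rewrite /= !mem_rl_coset.
apply/idP/idP; [exact: zeta_trans (zeta_sym Zxy) | exact: zeta_trans Zxy].
Qed.

Lemma qprojP (A : rlquot_type op Z) : exists x, A = pi x.
Proof. by case: A => A QA; case/imsetP: (QA) => x _ EA; exists x; apply: val_inj. Qed.

Lemma qopE (u v : T) : qmul (pi u) (pi v) = pi (op u v).
Proof.
have rep_zeta x : zeta x (qrep e (pi x)).
  rewrite /qrep; case: pickP => [r /= | none]; first by rewrite mem_rl_coset.
  by have := none x; rewrite /= mem_rl_coset zeta_refl.
by apply/eqP; rewrite qproj_eqE; apply: zeta_mul; apply: zeta_sym.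
Qed.

Lemma quot_f_rlE (y z x : T) :
  f_rl qmul (pi y) (pi z) (pi x) = pi (f_rl op y z x).
Proof.
rewrite /f_rl !qopE /rdiv; case: pickP => [X /eqP | none] /=.
  case: (qprojP X) => w -> /eqP; rewrite qopE qproj_eqE => Zw.
  apply/eqP; rewrite qproj_eqE.
  exact: zeta_div (zeta_refl _) Zw erefl (f_rlK y z x).
by have := none (pi (f_rl op y z x)); rewrite qopE f_rlK eqxx.
Qed.

Lemma quot_f_rl_inj (y z : T) : injective (f_rl qmul (pi y) (pi z)).
Proof.
move=> A B; case: (qprojP A) (qprojP B) => [a ->] [b ->].
rewrite !quot_f_rlE => /eqP; rewrite !qproj_eqE => Zf.
have := zeta_mul Zf (zeta_refl (op y z)); rewrite !f_rlK => Zab_yz.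
have Zab_y := zeta_div (zeta_refl z) Zab_yz erefl erefl.
by apply/eqP; rewrite qproj_eqE; apply: zeta_div (zeta_refl y) Zab_y erefl erefl.
Qed.

Lemma quot_fpermE (y z x : T) :
  fperm qmul (pi y) (pi z) (pi x) = pi (fperm op y z x).
Proof. by rewrite fperm_injE ?quot_f_rlE ?fpermE //; apply: quot_f_rl_inj. Qed.

Lemma nontrivial_transversal :
  exists rep : 'I_(#|quot_set op Z|).-1 -> T,
    forall x, ~~ zeta e x -> exists i, zeta (rep i) x.
Proof.
set Q := quot_set op Z :\ rl_coset op Z e.
have cardQ : #|Q| = #|quot_set op Z|.-1.
  by rewrite [#|quot_set _ _|](cardsD1 (rl_coset op Z e)) rl_coset_in_quot.
exists (fun i => odflt e [pick u in enum_val (cast_ord (esym cardQ) i)]).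
move=> x Zx_nontriv.
have Qx : rl_coset op Z x \in Q.
  rewrite !inE rl_coset_in_quot andbT; apply: contra Zx_nontriv => /eqP Ex.
  by have := mem_rl_coset x x; rewrite zeta_refl Ex mem_rl_coset.
exists (cast_ord cardQ (enum_rank_in Qx (rl_coset op Z x))).
rewrite cast_ordK enum_rankK_in //; case: pickP => [u | none] /=.
  by rewrite mem_rl_coset; apply: zeta_sym.
by have := none x; rewrite /= mem_rl_coset zeta_refl.
Qed.

Section Kernel.
Variable theta : {morphism G_rl op >-> {perm rlquot_type op Z}}.
Hypothesis theta_gen : forall y z : T,
  theta (fperm op y z) = fperm qmul (pi y) (pi z).

Lemma thetaE (g : {perm T}) (x : T) :
  g \in G_rl op -> theta g (pi x) = pi (g x).
Proof.
move=> Gg; move: g Gg x; apply: gen_ind => [x | g a Gg Ga IH x].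
  by rewrite morph1 !perm1.
rewrite morphM //; last exact: mem_gen.
case/imset2P: Ga => y z _ _ ->.
by rewrite !permM IH theta_gen quot_fpermE.
Qed.

Lemma ker_theta_zeta (g : {perm T}) (x : T) :
  g \in 'ker theta -> zeta x (g x).
Proof.
move=> Kg; rewrite -qproj_eqE -thetaE ?(dom_ker Kg) //.
by rewrite mker // perm1.
Qed.

Lemma ker_coord_center (g : {perm T}) (r : T) :
  g \in 'ker theta -> zeta e (ker_coord g r).
Proof. by move=> Kg; apply/zeta_rdiv/ker_theta_zeta. Qed.

Lemma ker_coordM (g h : {perm T}) (r : T) :
  g \in 'ker theta -> h \in 'ker theta ->
  ker_coord (g * h) r = op (ker_coord g r) (ker_coord h r).
Proof.
move=> Kg Kh; apply: (@mulIx r); rewrite ker_coordK permM.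
have Zg := ker_coord_center r Kg.
by rewrite center_assoc // ker_coordK -(ker_coordK g r) G_rl_center_commute ?(dom_ker Kh).
Qed.

Lemma ker_coord_class (g h : {perm T}) (r x : T) :
  g \in 'ker theta -> h \in 'ker theta -> zeta r x ->
  ker_coord g r = ker_coord h r -> g x = h x.
Proof.
move=> Kg Kh Zrx Egh; have Zw := zeta_rdiv Zrx.
rewrite -(rdivK r x) !G_rl_center_commute ?(dom_ker Kg) ?(dom_ker Kh) //.
by rewrite -!ker_coordK Egh.
Qed.

End Kernel.
End Center.
End RightLoop.

Theorem mainTheorem13 (T : finType) (op : T -> T -> T) (e : T) (zeta : rel T)
  (HS : is_right_loop op e)
  (Hzeta : is_center_congruence op e zeta)
  (theta : {morphism G_rl op >-> {perm rlquot_type op (center_of e zeta)}})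
  (Htheta : forall y z : T,
     theta (fperm op y z) =
     fperm (@qop T op (center_of e zeta) e)
           (qproj op (center_of e zeta) y) (qproj op (center_of e zeta) z)) :
  exists phi : {perm T} -> {ffun 'I_((#|quot_set op (center_of e zeta)|).-1) -> T},
    [/\ (forall g, g \in 'ker theta -> forall i, phi g i \in center_of e zeta),
        {in 'ker theta &, injective phi} &
        {in 'ker theta &, forall g h,
           phi (g * h)%g = [ffun i => op (phi g i) (phi h i)]}].
Proof.
case: HS => mul1x [mulx1 rdiv_uniq]; case: Hzeta => zeta_cong zeta_central _.
have [rep rep_cover] := nontrivial_transversal mul1x rdiv_uniq zeta_cong.
have fix_e := G_rl_fix_e mul1x rdiv_uniq.
have coord_class := ker_coord_class mul1x mulx1 rdiv_uniq zeta_cong zeta_central.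
exists (fun g => [ffun i => ker_coord op g (rep i)]); split.
- move=> g Kg i; rewrite ffunE inE.
  exact: (ker_coord_center mul1x rdiv_uniq zeta_cong Htheta (rep i) Kg).
- move=> g h Kg Kh /ffunP Egh; apply/permP => x.
  have [Zx | /rep_cover [i Zix]] := boolP (zeta e x).
    apply: (coord_class _ _ _ _ _ Kg Kh Zx).
    by rewrite /ker_coord (fix_e _ (dom_ker Kg)) (fix_e _ (dom_ker Kh)).
  by apply: (coord_class _ _ _ _ _ Kg Kh Zix); move: (Egh i); rewrite !ffunE.
- move=> g h Kg Kh; apply/ffunP => i; rewrite !ffunE.
  exact: (ker_coordM mul1x mulx1 rdiv_uniq zeta_cong zeta_central Htheta (rep i) Kg Kh).
Qed.
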